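(* Let $K_c=\operatorname{conv}\big(\mathbb{S}^{d-1}\cup\{\boldsymbol v_i\mid i\in I\}\big)\subset\mathbb{E}^d$ be a cap body, let $i\in I$, and let $S_i=\operatorname{bd}\operatorname{conv}(\mathbb{S}^{d-1}\cup\{\boldsymbol v_i\})\setminus\mathbb{S}^{d-1}$ be the spike of the vertex $\boldsymbol v_i$. Then a direction $\boldsymbol u\in\mathbb{S}^{d-1}$ illuminates every point of $S_i$ if and only if $\boldsymbol u$ illuminates the vertex $\boldsymbol v_i$.
   Context: $\mathbb{S}^{d-1}$ is the unit sphere centred at the origin and $B^d$ the closed unit ball. A cap body is $\operatorname{conv}(\mathbb{S}^{d-1}\cup\{\boldsymbol v_i\mid i\in I\})$ where $\{\boldsymbol v_i\}$ is a countable subset of $\mathbb{E}^d\setminus B^d$ such that for distinct $i,j$ the segment $\overline{\boldsymbol v_i\boldsymbol v_j}$ intersects $B^d$; the $\boldsymbol v_i$ are its vertices. A direction $\boldsymbol u\in\mathbb{S}^{d-1}$ illuminates a boundary point $\boldsymbol p$ of the convex body $K_c$ if $\boldsymbol p+\lambda\boldsymbol u$ is in the interior of $K_c$ for some $\lambda>0$. *)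

From HB Require Import structures.
From mathcomp Require Import all_boot all_order all_algebra.
From mathcomp Require Import classical_sets reals.
Set Implicit Arguments. Unset Strict Implicit. Unset Printing Implicit Defensive.
Import Order.TTheory GRing.Theory Num.Theory.
Local Open Scope ring_scope.
Local Open Scope classical_set_scope.

(* Points of E^d are row vectors 'rV[R]_d with the Euclidean inner product. *)
Definition dotv (R : realType) (d : nat) (x y : 'rV[R]_d) : R :=
  \sum_(k < d) x 0 k * y 0 k.

Definition sphere (R : realType) (d : nat) : set 'rV[R]_d :=
  [set x | dotv x x = 1].
Definition ball_unit (R : realType) (d : nat) : set 'rV[R]_d :=
  [set x | dotv x x <= 1].

Definition conv (R : realType) (d : nat) (A : set 'rV[R]_d) : set 'rV[R]_d :=
  [set x | exists n (w : 'I_n -> R) (p : 'I_n -> 'rV[R]_d),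
     [/\ forall k, 0 <= w k, \sum_(k < n) w k = 1,
         forall k, A (p k) & x = \sum_(k < n) w k *: p k]].

Arguments sphere R d : clear implicits.
Arguments ball_unit R d : clear implicits.

Definition interior_e (R : realType) (d : nat) (A : set 'rV[R]_d) : set 'rV[R]_d :=
  [set x | exists e : R, 0 < e /\
     forall y, dotv (y - x) (y - x) < e ^+ 2 -> A y].
Definition closure_e (R : realType) (d : nat) (A : set 'rV[R]_d) : set 'rV[R]_d :=
  [set x | forall e : R, 0 < e ->
     exists y, A y /\ dotv (y - x) (y - x) < e ^+ 2].
Definition bd (R : realType) (d : nat) (A : set 'rV[R]_d) : set 'rV[R]_d :=
  [set x | closure_e A x /\ ~ interior_e A x].

Definition cap_body (R : realType) (d : nat) (I : Type) (v : I -> 'rV[R]_d) :=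
  conv (sphere R d `|` range v).

Definition spike (R : realType) (d : nat) (w : 'rV[R]_d) : set 'rV[R]_d :=
  bd (conv (sphere R d `|` [set w])) `\` sphere R d.

Definition illuminates (R : realType) (d : nat) (K : set 'rV[R]_d)
    (u p : 'rV[R]_d) : Prop :=
  exists lam : R, 0 < lam /\ interior_e K (p + lam *: u).

(* The vertex v lies in its own spike: every point of conv(S ∪ {v}) has inner
   product at most |v|^2 with v, so the points (1 + τ) v near v lie outside it.  A spike point inside the open unit
   ball is interior to K, hence illuminated by any direction.  A spike point p
   outside the ball is a limit of points c = W v + (1 - W) s with s in conv S. *)

From mathcomp Require Import all_boot all_order all_algebra.
From mathcomp Require Import classical_sets reals.
From mathcomp Require Import ring lra.
Import Order.TTheory GRing.Theory Num.Theory.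
Local Open Scope ring_scope.
Local Open Scope classical_set_scope.
Set Implicit Arguments. Unset Strict Implicit.

Section InnerProduct.
Variables (R : realType) (d : nat).
Implicit Types (x y z : 'rV[R]_d).

Lemma dotvC x y : dotv x y = dotv y x.
Proof. by apply: eq_bigr => k _; rewrite mulrC. Qed.

Lemma dotvDl x y z : dotv (x + y) z = dotv x z + dotv y z.
Proof. by rewrite /dotv -big_split; apply: eq_bigr => k _; rewrite !mxE mulrDl. Qed.

Lemma dotvBl x y z : dotv (x - y) z = dotv x z - dotv y z.
Proof. by rewrite /dotv -sumrB; apply: eq_bigr => k _; rewrite !mxE mulrBl. Qed.

Lemma dotvZl a x y : dotv (a *: x) y = a * dotv x y.
Proof. by rewrite /dotv mulr_sumr; apply: eq_bigr => k _; rewrite !mxE mulrA. Qed.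

Lemma dotvNl x y : dotv (- x) y = - dotv x y.
Proof. by rewrite -scaleN1r dotvZl mulN1r. Qed.

Lemma dotvDr x y z : dotv x (y + z) = dotv x y + dotv x z.
Proof. by rewrite dotvC dotvDl !(dotvC x). Qed.

Lemma dotvBr x y z : dotv x (y - z) = dotv x y - dotv x z.
Proof. by rewrite dotvC dotvBl !(dotvC x). Qed.

Lemma dotvNr x y : dotv x (- y) = - dotv x y.
Proof. by rewrite dotvC dotvNl dotvC. Qed.

Lemma dotvZr a x y : dotv x (a *: y) = a * dotv x y.
Proof. by rewrite dotvC dotvZl dotvC. Qed.

Lemma dotv0l y : dotv 0 y = 0.
Proof. by rewrite -(scale0r 0) dotvZl mul0r. Qed.

Lemma dotv_suml n (w : 'I_n -> R) (p : 'I_n -> 'rV[R]_d) y :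
  dotv (\sum_(k < n) w k *: p k) y = \sum_(k < n) w k * dotv (p k) y.
Proof.
elim: n w p => [|n IH] w p; first by rewrite !big_ord0 dotv0l.
by rewrite !big_ord_recr /= dotvDl IH dotvZl.
Qed.

Lemma dotv_ge0 x : 0 <= dotv x x.
Proof. by apply: sumr_ge0 => k _; rewrite -expr2 sqr_ge0. Qed.

Lemma dotvDD x y : dotv (x + y) (x + y) = dotv x x + 2 * dotv x y + dotv y y.
Proof. by rewrite dotvDl !dotvDr (dotvC y x); ring. Qed.

Lemma dotvBB x y : dotv (x - y) (x - y) = dotv x x - 2 * dotv x y + dotv y y.
Proof. by rewrite dotvBl !dotvBr (dotvC y x); ring. Qed.

Lemma dotv_amgm x y : 2 * dotv x y <= dotv x x + dotv y y.
Proof. by have := dotv_ge0 (x - y); rewrite dotvBB; lra. Qed.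

Lemma dotvBB_le x y : dotv (x - y) (x - y) <= 2 * dotv x x + 2 * dotv y y.
Proof. by have := dotv_ge0 (x + y); rewrite dotvBB dotvDD; lra. Qed.

Lemma dotv_wamgm t x y : 0 < t -> - (2 * dotv x y) <= t * dotv x x + t^-1 * dotv y y.
Proof.
move=> t_gt0; have tV_ge0 : 0 <= t^-1 by rewrite invr_ge0 ltW.
have := mulr_ge0 tV_ge0 (dotv_ge0 (t *: x + y)).
rewrite dotvDD !dotvZl !dotvZr.
have -> : t^-1 * (t * (t * dotv x x) + 2 * (t * dotv x y) + dotv y y)
        = t * dotv x x + 2 * dotv x y + t^-1 * dotv y y.
  by field; rewrite gt_eqF.
lra.
Qed.

Lemma dotv_gt_near t x y : 0 < t ->
  dotv x x < (t / (1 + dotv y y)) ^+ 2 -> - t < dotv x y.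
Proof.
move=> t_gt0 x_small; set Y := dotv y y in x_small *.
have Y_ge0 : 0 <= Y := dotv_ge0 y.
have Y1 : 0 < 1 + Y by lra.
have k_gt0 : 0 < (1 + Y) / t by rewrite divr_gt0.
have := dotv_wamgm x y k_gt0; rewrite invf_div -/Y.
have : (1 + Y) / t * dotv x x < t / (1 + Y).
  have -> : t / (1 + Y) = (1 + Y) / t * (t / (1 + Y)) ^+ 2.
    by field; rewrite !gt_eqF.
  by rewrite ltr_pM2l.
have : t / (1 + Y) * Y = t - t / (1 + Y) by field; rewrite gt_eqF.
lra.
Qed.

End InnerProduct.

Section Convexity.
Variables (R : realType) (d : nat).
Implicit Types (A B : set 'rV[R]_d) (x y c : 'rV[R]_d).

Lemma subset_conv A : A `<=` conv A.
Proof.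
move=> x Ax; exists 1%N, (fun=> 1), (fun=> x).
by split=> //; rewrite big_ord1 ?scale1r.
Qed.

Lemma conv_subset A B : A `<=` B -> conv A `<=` conv B.
Proof.
by move=> AB x [n [w [p [w0 w1 Ap ->]]]]; exists n, w, p; split=> // k; apply: AB.
Qed.

Lemma conv_segment A x y t : conv A x -> conv A y -> 0 <= t <= 1 ->
  conv A (t *: x + (1 - t) *: y).
Proof.
move=> [n [w [p [w0 w1 Ap ->]]]] [m [w' [p' [w0' w1' Ap' ->]]]] /andP[t0 t1].
exists (n + m)%N,
  (fun k => match split k with inl a => t * w a | inr b => (1 - t) * w' b end),
  (fun k => match split k with inl a => p a | inr b => p' b end).
split.
- by move=> k; case: (split k) => a; apply: mulr_ge0 => //; lra.
- rewrite big_split_ord /=.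
  under eq_bigr => a _ do rewrite (unsplitK (inl a)).
  under [X in _ + X = _]eq_bigr => a _ do rewrite (unsplitK (inr a)).
  by rewrite -!mulr_sumr w1 w1' !mulr1 addrC subrK.
- by move=> k; case: (split k).
- rewrite big_split_ord /= !scaler_sumr.
  under [in RHS]eq_bigr => a _ do rewrite (unsplitK (inl a)).
  under [X in _ = _ + X]eq_bigr => a _ do rewrite (unsplitK (inr a)).
  by congr (_ + _); apply: eq_bigr => a _; rewrite scalerA.
Qed.

Lemma conv_dotv_le A q m : (forall a, A a -> dotv a q <= m) ->
  forall c, conv A c -> dotv c q <= m.
Proof.
move=> Am _ [n [w [p [w0 w1 Ap ->]]]].
rewrite dotv_suml -[m]mul1r -w1 mulr_suml.
by apply: ler_sum => k _; apply: ler_wpM2l => //; apply: Am.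
Qed.

Lemma conv_setU1 A a0 v c : A a0 -> conv (A `|` [set v]) c ->
  exists W s, [/\ 0 <= W <= 1, conv A s & c = W *: v + (1 - W) *: s].
Proof.
move=> Aa0 [n [w [p [w0 w1 Ap ->]]]].
set W := \sum_(k | p k == v) w k.
set rest := \sum_(k | p k != v) w k *: p k.
have W1 : 1 - W = \sum_(k | p k != v) w k.
  by rewrite -w1 (bigID (fun k => p k == v)) /= -/W addrAC subrr add0r.
have rest_ge0 : 0 <= \sum_(k | p k != v) w k by apply: sumr_ge0.
have W_ge0 : 0 <= W by apply: sumr_ge0.
have -> : \sum_(k < n) w k *: p k = W *: v + rest.
  rewrite (bigID (fun k => p k == v)) /= scaler_suml.
  by congr (_ + _); apply: eq_bigr => k /eqP ->.
have [W_eq1 | W_neq1] := eqVneq W 1.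
  exists 1, a0; split; [by rewrite lexx ler01 | exact: subset_conv |].
  suff -> : rest = 0 by rewrite W_eq1 subrr scale0r.
  have rest0 : \sum_(k | p k != v) w k = 0 by rewrite -W1 W_eq1 subrr.
  by apply: big1 => k pk; rewrite (psumr_eq0P (fun k _ => w0 k) rest0 pk) scale0r.
have W_lt1 : W < 1 by rewrite lt_neqAle W_neq1 -subr_ge0 W1.
have W1_gt0 : 0 < 1 - W by rewrite subr_gt0.
exists W, ((1 - W)^-1 *: rest); split; first by rewrite W_ge0 ltW.
- exists n, (fun k => (1 - W)^-1 * (if p k != v then w k else 0)),
            (fun k => if p k != v then p k else a0); split.
  + by move=> k; apply: mulr_ge0; [rewrite invr_ge0 ltW | case: ifP].
  + by rewrite -mulr_sumr -big_mkcond -W1 mulVf // gt_eqF.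
  + by move=> k; case: ifP => [/negbTE pk|//]; case: (Ap k) => // /= /eqP; rewrite pk.
  + rewrite /rest scaler_sumr big_mkcond; apply: eq_bigr => k _.
    by case: ifP; rewrite ?scalerA // mulr0 !scale0r.
- by rewrite scalerA divff ?scale1r // gt_eqF.
Qed.

End Convexity.

Section UnitBall.
Variables (R : realType) (d : nat).
Implicit Types (x y q s : 'rV[R]_d).

Lemma conv_sphere_dotv_le q s : conv (sphere R d) s -> dotv s q <= (1 + dotv q q) / 2.
Proof. by apply: conv_dotv_le => a /= a1; have := dotv_amgm a q; rewrite a1; lra. Qed.

Lemma ball_unit_conv_sphere e x : sphere R d e -> ball_unit R d x -> conv (sphere R d) x.
Proof.
rewrite /sphere /ball_unit /= => e1 x1.
set a := dotv x e; set D := a ^+ 2 + 1 - dotv x x.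
have D_ge0 : 0 <= D by have := sqr_ge0 a; rewrite /D; lra.
set s := Num.sqrt D; have sD : s ^+ 2 = D by rewrite sqr_sqrtr.
have [s0 | s_neq0] := eqVneq s 0.
  apply: subset_conv => /=; have := sqr_ge0 a.
  by move: sD; rewrite s0 expr0n /D /=; lra.
have s_gt0 : 0 < s by rewrite lt_def s_neq0 sqrtr_ge0.
have /andP[as1 as2] : - s <= a <= s.
  by rewrite -ler_norml -sqrtr_sqr ler_sqrt // /D; lra.
have on_sphere t : (t + a) ^+ 2 = D -> sphere R d (x + t *: e).
  rewrite /sphere /= dotvDD dotvZr dotvZl dotvZr e1 -/a /D => tD; nra.
set lam := (s - a) / (2 * s).
have -> : x = lam *: (x + (- s - a) *: e) + (1 - lam) *: (x + (s - a) *: e).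
  rewrite !scalerDr !scalerA addrACA -scalerDl -scalerDl.
  have -> : lam + (1 - lam) = 1 by ring.
  have -> : lam * (- s - a) + (1 - lam) * (s - a) = 0 by rewrite /lam; field.
  by rewrite scale1r scale0r addr0.
apply: conv_segment; try by apply: subset_conv; apply: on_sphere; rewrite -sD; ring.
by rewrite divr_ge0 ?ler_pdivrMr ?mulr_gt0 //=; lra.
Qed.

Lemma ball_unit_open q : dotv q q < 1 ->
  exists2 r, 0 < r & forall y, dotv (y - q) (y - q) < r ^+ 2 -> dotv y y < 1.
Proof.
move=> q1; have q_ge0 := dotv_ge0 q.
set t := (1 - dotv q q) / 2.
have t_gt0 : 0 < t by rewrite /t; lra.
have t_le : t <= 1 / 2 by rewrite /t; lra.
exists (t / 2) => [|y b_small]; first by rewrite divr_gt0.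
have -> : y = q + (y - q) by rewrite addrC subrK.
set b := y - q in b_small *.
have := dotv_wamgm q (- b) t_gt0; rewrite dotvNr dotvNl dotvNr opprK dotvDD.
have tq : t * dotv q q <= t by rewrite -[leRHS]mulr1 ler_wpM2l ?ltW //; lra.
have tb : t^-1 * dotv b b < t / 4.
  have -> : t / 4 = t^-1 * (t / 2) ^+ 2 by field; rewrite gt_eqF.
  by rewrite ltr_pM2l ?invr_gt0.
have b2 : dotv b b < t / 8.
  apply: lt_le_trans b_small _; rewrite expr_div_n !expr2.
  have : t * t <= t * (1 / 2) by rewrite ler_wpM2l // ltW.
  lra.
rewrite /t in tq tb b2 *; lra.
Qed.

End UnitBall.

Lemma lt_sqr_le (R : realDomainType) (x a b : R) :
  0 <= a -> a <= b -> x < a ^+ 2 -> x < b ^+ 2.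
Proof.
move=> a_ge0 ab /lt_le_trans; apply.
by rewrite ler_pXn2r // nnegrE // (le_trans a_ge0).
Qed.

Section Illumination.
Variables (R : realType) (d : nat).
Implicit Types (A : set 'rV[R]_d) (a p s y z V : 'rV[R]_d).

Lemma interior_e_near A z p r : 0 < r ->
  (forall y, dotv (y - z) (y - z) < r ^+ 2 -> A y) ->
  dotv (z - p) (z - p) < (r / 2) ^+ 2 -> interior_e A p.
Proof.
move=> r_gt0 zA zp; exists (r / 2); split=> [|y yp]; first by rewrite divr_gt0.
apply: zA; have := dotvBB_le (y - p) (z - p).
rewrite opprB addrA subrK.
have r4 : (r / 2) ^+ 2 = r ^+ 2 / 4 by field.
by rewrite r4 in yp zp; lra.
Qed.

Lemma conv_ball_homothety A a s e W : 0 < W <= 1 -> conv A s ->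
  (forall y, dotv (y - a) (y - a) < e ^+ 2 -> conv A y) ->
  forall y, let c := W *: a + (1 - W) *: s in
  dotv (y - c) (y - c) < (W * e) ^+ 2 -> conv A y.
Proof.
move=> /andP[W_gt0 W_le1] As aA y c yc.
have -> : y = W *: (a + W^-1 *: (y - c)) + (1 - W) *: s.
  by apply/rowP => j; rewrite !mxE; field; rewrite gt_eqF.
apply: conv_segment => //; last by rewrite W_le1 ltW.
apply: aA; rewrite addrAC subrr add0r dotvZl dotvZr mulrA -expr2 exprVn.
by rewrite mulrC ltr_pdivrMr ?exprn_gt0 // mulrC -exprMn.
Qed.

Lemma vertex_weight_lower_bound V p s W :
  1 < dotv p p -> conv (sphere R d) s -> 0 <= W <= 1 ->
  let c := W *: V + (1 - W) *: s in
  dotv (c - p) (c - p) < ((dotv p p - 1) / 4 / (1 + dotv p p)) ^+ 2 ->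
  dotv p p - 1 <= 2 * W * (dotv V V - 1).
Proof.
move=> p1 Ss /andP[W_ge0 W_le1] c cp.
have t_gt0 : 0 < (dotv p p - 1) / 4 by lra.
have := dotv_gt_near t_gt0 cp; rewrite dotvBl dotvDl !dotvZl.
have : (1 - W) * dotv s p <= (1 - W) * ((1 + dotv p p) / 2).
  by rewrite ler_wpM2l ?subr_ge0 ?conv_sphere_dotv_le.
have : W * (2 * dotv V p) <= W * (dotv V V + dotv p p).
  by rewrite ler_wpM2l ?dotv_amgm.
lra.
Qed.

Lemma vertex_in_spike V : 1 < dotv V V -> spike V V.
Proof.
move=> V1; split; last by rewrite /sphere /= => V_eq; lra.
split.
  move=> e e_gt0; exists V; split; first by apply: subset_conv; right.
  by rewrite subrr dotv0l exprn_gt0.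
case=> e [e_gt0 Vball].
set tau := e / (2 * dotv V V).
have tau_gt0 : 0 < tau by rewrite divr_gt0 ?mulr_gt0 //; lra.
have : conv (sphere R d `|` [set V]) (V + tau *: V).
  apply: Vball; rewrite addrAC subrr add0r dotvZl dotvZr.
  have -> : tau * (tau * dotv V V) = e ^+ 2 / (4 * dotv V V).
    by rewrite /tau; field; rewrite gt_eqF //; lra.
  rewrite ltr_pdivrMr ?mulr_gt0 //; last lra.
  by rewrite -[X in X < _]mulr1 ltr_pM2l ?exprn_gt0 //; lra.
have V_max a : (sphere R d `|` [set V]) a -> dotv a V <= dotv V V.
  by case=> [/= a1 | /= ->] //; have := dotv_amgm a V; rewrite a1; lra.
move=> /(conv_dotv_le V_max); rewrite dotvDl dotvZl.
have : 0 < tau * dotv V V by rewrite mulr_gt0 //; lra.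
lra.
Qed.

Section IlluminatedSpike.
Variables (B : set 'rV[R]_d) (u : 'rV[R]_d).
Hypotheses (sphere_B : sphere R d `<=` B) (u1 : sphere R d u).

Lemma illuminates_inside_ball p : dotv p p < 1 -> illuminates (conv B) u p.
Proof.
move=> p1; have [r r_gt0 r_ball] := ball_unit_open p1.
exists (r / 4); split; first by rewrite divr_gt0.
apply: (@interior_e_near _ p _ r) => // [y /r_ball/ltW y1|].
  by apply: conv_subset sphere_B _ _; apply: ball_unit_conv_sphere u1 _.
have uu : dotv u u = 1 := u1.
rewrite opprD addrA subrr add0r dotvNl dotvNr opprK dotvZl dotvZr uu mulr1.
have -> : (r / 2) ^+ 2 = r / 4 * r by field.
by rewrite ltr_pM2l ?divr_gt0 //; lra.
Qed.

Lemma illuminates_outside_ball V p : 1 < dotv V V ->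
  illuminates (conv B) u V -> closure_e (conv (sphere R d `|` [set V])) p ->
  1 < dotv p p -> illuminates (conv B) u p.
Proof.
move=> V1 [lam [lam_gt0 [e [e_gt0 V_ball]]]] p_cl p1.
set W0 := (dotv p p - 1) / (2 * (dotv V V - 1)).
have W0_gt0 : 0 < W0 by rewrite divr_gt0 ?mulr_gt0 //; lra.
set eps1 := (dotv p p - 1) / 4 / (1 + dotv p p).
have eps1_gt0 : 0 < eps1 by rewrite !divr_gt0 //; lra.
set eps := Num.min eps1 (W0 * e / 2).
have eps_gt0 : 0 < eps.
  by rewrite lt_min eps1_gt0 /=; apply: divr_gt0 => //; apply: mulr_gt0.
have [c [c_conv cp]] := p_cl eps eps_gt0.
have [W [s [W01 Ss c_def]]] := conv_setU1 u1 c_conv.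
have W0W : W0 <= W.
  have := vertex_weight_lower_bound (V := V) p1 Ss W01.
  have eps_le1 : eps <= eps1 by rewrite ge_min lexx.
  rewrite -c_def => /(_ (lt_sqr_le (ltW eps_gt0) eps_le1 cp)).
  by rewrite /W0 ler_pdivrMr ?mulr_gt0 //; lra.
have W_gt0 : 0 < W by apply: lt_le_trans W0W.
exists (W * lam); split; first by rewrite mulr_gt0.
apply: (@interior_e_near _ (W *: (V + lam *: u) + (1 - W) *: s) _ (W * e)).
- by rewrite mulr_gt0.
- apply: conv_ball_homothety; first by rewrite W_gt0 (andP W01).2.
    by apply: conv_subset Ss.
  by move=> y /V_ball.
- have -> : W *: (V + lam *: u) + (1 - W) *: s - (p + (W * lam) *: u) = c - p.
    by rewrite c_def; apply/rowP => j; rewrite !mxE; ring.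
  apply: lt_sqr_le (ltW eps_gt0) _ cp.
  by rewrite ge_min !ler_pM2r ?W0W ?orbT ?invr_gt0.
Qed.

End IlluminatedSpike.

End Illumination.

Theorem lemma3 (R : realType) (d : nat) (I : countType) (v : I -> 'rV[R]_d)
  (hout : forall i, ~ ball_unit R d (v i))
  (hseg : forall i j, i != j ->
     exists t : R, [/\ 0 <= t, t <= 1 &
       ball_unit R d ((1 - t) *: v i + t *: v j)])
  (i : I) (u : 'rV[R]_d) (hu : sphere R d u) :
  (forall p, spike (v i) p -> illuminates (cap_body v) u p) <->
  illuminates (cap_body v) u (v i).
Proof.
have V1 : 1 < dotv (v i) (v i) by rewrite ltNge; apply/negP; exact: hout.
split=> [spike_lit | vertex_lit p]; first exact/spike_lit/vertex_in_spike.
case=> -[p_cl _] p_notS.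
have : dotv p p != 1 by apply/eqP.
rewrite neq_lt => /orP[p_lt1 | p_gt1].
- exact: illuminates_inside_ball.
- exact: illuminates_outside_ball vertex_lit p_cl p_gt1.
Qed.
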